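(* Fix a $C^0$-concept over $\mathbb{K}$. Let $E,F\in\mathcal{M}$, $U\subseteq E$ open, $k\in\mathbb{N}_0$ and $f\colon U\to F$ of class $C^k$. Then for all $(x,h,t)\in U^{[1]}$, $$f(x+th)=\sum_{j=0}^k t^j a_j(x,h)+t^kR_{k+1}(x,h,t),$$ where $a_j\colon U\times E\to F$ is of class $C^{k-j}$ and $R_{k+1}\colon U^{[1]}\to F$ is of class $C^0$ and satisfies $R_{k+1}(x,h,0)=0$. An expansion of $f$ with these properties is unique. Moreover, $a_j(x,h)$ is homogeneous of degree $j$ in $h$, i.e. $a_j(x,sh)=s^ja_j(x,h)$ for all $s\in\mathbb{K}$.
   Context: Let $\mathbb{K}$ be a commutative ring with unit carrying a topology. A $C^0$-concept over $\mathbb{K}$ consists of: (a) a class $\mathcal{M}$ of topologized $\mathbb{K}$-modules (modules with an arbitrary topology) with $\mathbb{K}\in\mathcal{M}$; (b) for $E,F\in\mathcal{M}$ and open $U\subseteq E$, a set $C^0(U,F)$ of continuous maps $U\to F$; (c) for $E_1,E_2\in\mathcal{M}$ a topology on $E_1\times E_2$ (not necessarily the product topology) making it a member of $\mathcal{M}$; subject to: (I.1) composites of $C^0$-maps are $C^0$; identities and inclusions of open subsets are $C^0$; (I.2) $x\mapsto rx+b$ is $C^0$; (I.3) $t\mapsto tv+x$, $\mathbb{K}\to E$, is $C^0$; (I.4) $\mathbb{K}^\times$ is open and inversion is $C^0$; (I.5) being $C^0$ is local on open covers; (II.1) projections and the maps $v\mapsto(v,y)$, $w\mapsto(x,w)$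 are $C^0$; (II.2) products $f_1\times f_2$ of $C^0$-maps are $C^0$; (II.3) diagonals are $C^0$; (II.4) exchange and associativity identifications of products are $C^0$ both ways; (II.5) addition and scalar multiplication are $C^0$; (III) a $C^0$-map on an open $U\subseteq\mathbb{K}$ is determined by its restriction to $U\cap\mathbb{K}^\times$. For open $V\subseteq X$, $V^{[1]}=\{(x,v,t)\in V\times X\times\mathbb{K}:x+tv\in V\}$ (topologized as subset of the product from (c)). A $C^0$-map $g\colon V\to Y$ is $C^1$ if there is a $C^0$-map $g^{[1]}\colon V^{[1]}\to Y$ with $g(x+tv)-g(x)=t\,g^{[1]}(x,v,t)$; recursively $V^{[k+1]}=(V^{[k]})^{[1]}$, $g$ is $C^{k+1}$ if $C^k$ and $g^{[k]}$ is $C^1$, $g^{[k+1]}=(g^{[k]})^{[1]}$. *)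

From HB Require Import structures.
From mathcomp Require Import all_boot all_order all_algebra.
Set Implicit Arguments. Unset Strict Implicit. Unset Printing Implicit Defensive.
Import GRing.Theory.
Local Open Scope ring_scope.

(* A C^0-concept over a commutative unital ring K.
   - [Obj] indexes the class M; [car E] is the underlying K-module of E,
     [opn E] its (arbitrary) topology.
   - [C0 E F U f] : f (a total function, only its values on U matter) is in
     C^0(U,F); only meaningful for open U.
   - [KO] is K itself as a member of M (identified with K via toK/ofK); the
     topology of K is the one of [KO].
   - [prodO E1 E2] is E1 x E2 (with its chosen topology), identified with the
     product module via [pairO], [p1], [p2]. *)
Unset Implicit Arguments.
Record C0concept (K : comUnitRingType) := {
  Obj : Type;
  car : Obj -> lmodType K;
  opn : forall E, (car E -> Prop) -> Prop;
  C0 : forall E F, (car E -> Prop) -> (car E -> car F) -> Prop;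
  KO : Obj;
  toK : car KO -> K;
  ofK : K -> car KO;
  prodO : Obj -> Obj -> Obj;
  pairO : forall E1 E2, car E1 -> car E2 -> car (prodO E1 E2);
  p1 : forall E1 E2, car (prodO E1 E2) -> car E1;
  p2 : forall E1 E2, car (prodO E1 E2) -> car E2;
  opn_T : forall E, opn E (fun _ => True);
  opn_I : forall E A B, opn E A -> opn E B -> opn E (fun x => A x /\ B x);
  opn_U : forall E (I : Type) (A : I -> car E -> Prop),
      (forall i, opn E (A i)) -> opn E (fun x => exists i, A i x);
  toK_ofK : forall t, toK (ofK t) = t;
  ofK_toK : forall s, ofK (toK s) = s;
  toK_add : forall s s', toK (s + s') = toK s + toK s';
  toK_scale : forall r s, toK (r *: s) = r * toK s;
  p1_pair : forall E1 E2 a b, p1 E1 E2 (pairO E1 E2 a b) = a;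
  p2_pair : forall E1 E2 a b, p2 E1 E2 (pairO E1 E2 a b) = b;
  pair_p : forall E1 E2 z, pairO E1 E2 (p1 E1 E2 z) (p2 E1 E2 z) = z;
  pair_add : forall E1 E2 a a' b b',
      pairO E1 E2 (a + a') (b + b') = pairO E1 E2 a b + pairO E1 E2 a' b';
  pair_scale : forall E1 E2 r a b,
      pairO E1 E2 (r *: a) (r *: b) = r *: pairO E1 E2 a b;
  C0_cont : forall E F U f, opn E U -> C0 E F U f ->
      forall W, opn F W -> exists O, opn E O /\
        (forall x, U x -> (W (f x) <-> O x));
  C0_ext : forall E F U (f g : car E -> car F), opn E U ->
      (forall x, U x -> f x = g x) -> C0 E F U f -> C0 E F U g;
  C0_comp : forall E F G U V (f : car E -> car F) (g : car F -> car G),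
      opn E U -> opn F V -> (forall x, U x -> V (f x)) ->
      C0 E F U f -> C0 F G V g -> C0 E G U (fun x => g (f x));
  C0_id : forall E U, opn E U -> C0 E E U (fun x => x);
  C0_affine : forall E (r : K) (b : car E),
      C0 E E (fun _ => True) (fun x => r *: x + b);
  C0_line : forall E (v x : car E),
      C0 KO E (fun _ => True) (fun s => toK s *: v + x);
  opn_units : opn KO (fun s => toK s \is a GRing.unit);
  C0_inv : C0 KO KO (fun s => toK s \is a GRing.unit)
                    (fun s => ofK (toK s)^-1);
  C0_local : forall E F U (f : car E -> car F) (I : Type) (A : I -> car E -> Prop),
      opn E U -> (forall i, opn E (A i)) ->
      (forall x, U x <-> exists i, A i x) ->
      (forall i, C0 E F (A i) f) -> C0 E F U f;
  C0_p1 : forall E1 E2, C0 (prodO E1 E2) E1 (fun _ => True) (p1 E1 E2);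
  C0_p2 : forall E1 E2, C0 (prodO E1 E2) E2 (fun _ => True) (p2 E1 E2);
  C0_pairl : forall E1 E2 y,
      C0 E1 (prodO E1 E2) (fun _ => True) (fun v => pairO E1 E2 v y);
  C0_pairr : forall E1 E2 x,
      C0 E2 (prodO E1 E2) (fun _ => True) (fun w => pairO E1 E2 x w);
  C0_prod : forall E1 E2 F1 F2 U1 U2 (f1 : car E1 -> car F1) (f2 : car E2 -> car F2),
      opn E1 U1 -> opn E2 U2 -> C0 E1 F1 U1 f1 -> C0 E2 F2 U2 f2 ->
      C0 (prodO E1 E2) (prodO F1 F2)
         (fun z => U1 (p1 E1 E2 z) /\ U2 (p2 E1 E2 z))
         (fun z => pairO F1 F2 (f1 (p1 E1 E2 z)) (f2 (p2 E1 E2 z)));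
  C0_diag : forall E, C0 E (prodO E E) (fun _ => True) (fun x => pairO E E x x);
  C0_swap : forall E1 E2, C0 (prodO E1 E2) (prodO E2 E1) (fun _ => True)
      (fun z => pairO E2 E1 (p2 E1 E2 z) (p1 E1 E2 z));
  C0_assoc : forall E1 E2 E3,
      C0 (prodO (prodO E1 E2) E3) (prodO E1 (prodO E2 E3)) (fun _ => True)
      (fun z => pairO E1 (prodO E2 E3)
                  (p1 E1 E2 (p1 (prodO E1 E2) E3 z))
                  (pairO E2 E3 (p2 E1 E2 (p1 (prodO E1 E2) E3 z))
                               (p2 (prodO E1 E2) E3 z)));
  C0_assocV : forall E1 E2 E3,
      C0 (prodO E1 (prodO E2 E3)) (prodO (prodO E1 E2) E3) (fun _ => True)
      (fun z => pairO (prodO E1 E2) E3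
                  (pairO E1 E2 (p1 E1 (prodO E2 E3) z)
                               (p1 E2 E3 (p2 E1 (prodO E2 E3) z)))
                  (p2 E2 E3 (p2 E1 (prodO E2 E3) z)));
  C0_add : forall E, C0 (prodO E E) E (fun _ => True)
      (fun z => p1 E E z + p2 E E z);
  C0_scale : forall E, C0 (prodO KO E) E (fun _ => True)
      (fun z => toK (p1 KO E z) *: p2 KO E z);
  C0_units_dense : forall F U (f g : car KO -> car F), opn KO U ->
      C0 KO F U f -> C0 KO F U g ->
      (forall s, U s -> toK s \is a GRing.unit -> f s = g s) ->
      forall s, U s -> f s = g s
}.

Set Implicit Arguments.
Arguments Obj {K}. Arguments car {K c}. Arguments opn {K c E}.
Arguments C0 {K c E F}. Arguments KO {K c}. Arguments toK {K c}.
Arguments ofK {K c}. Arguments prodO {K c}. Arguments pairO {K c E1 E2}.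
Arguments p1 {K c E1 E2}. Arguments p2 {K c E1 E2}.

Section Ck.
Variables (K : comUnitRingType) (C : C0concept K).

Definition X1 (X : Obj C) : Obj C := prodO (prodO X X) KO.

Definition triple (X : Obj C) (x v : car X) (t : K) : car (X1 X) :=
  pairO (pairO x v) (ofK t).

(* V^{[1]} = {(x,v,t) in V x X x K : x + t v in V} *)
Definition V1 (X : Obj C) (V : car X -> Prop) : car (X1 X) -> Prop :=
  fun z => V (p1 (p1 z)) /\ V (p1 (p1 z) + toK (p2 z) *: p2 (p1 z)).

Fixpoint iterO (k : nat) (X : Obj C) : Obj C :=
  match k with 0 => X | k'.+1 => X1 (iterO k' X) end.

Fixpoint iterS (k : nat) (X : Obj C) (V : car X -> Prop)
  : car (iterO k X) -> Prop :=
  match k return car (iterO k X) -> Prop with 0 => V | k'.+1 => V1 (@iterS k' X V) end.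

Definition is_DQ (X Y : Obj C) (V : car X -> Prop) (g : car X -> car Y)
  (g1 : car (X1 X) -> car Y) : Prop :=
  C0 (V1 V) g1 /\
  forall x v t, V1 V (triple x v t) ->
    g (x + t *: v) - g x = t *: g1 (triple x v t).

Fixpoint Dk (k : nat) (X Y : Obj C) (V : car X -> Prop) (g : car X -> car Y)
  : (car (iterO k X) -> car Y) -> Prop :=
  match k return (car (iterO k X) -> car Y) -> Prop with
  | 0 => fun g0 => C0 V g /\ (forall x, V x -> g0 x = g x)
  | k'.+1 => fun gk1 => exists gk, @Dk k' X Y V g gk /\ is_DQ (@iterS k' X V) gk gk1
  end.

Definition Ck (k : nat) (X Y : Obj C) (V : car X -> Prop) (g : car X -> car Y)
  : Prop := exists gk, @Dk k X Y V g gk.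

Definition UxE (E : Obj C) (U : car E -> Prop) : car (prodO E E) -> Prop :=
  fun z => U (p1 z).

Definition is_expansion (k : nat) (E F : Obj C) (U : car E -> Prop)
  (f : car E -> car F) (a : nat -> car (prodO E E) -> car F)
  (R : car (X1 E) -> car F) : Prop :=
  (forall j, (j <= k)%N -> Ck (k - j) (UxE U) (a j)) /\
  Ck 0 (V1 U) R /\
  (forall x h, U x -> R (triple x h 0) = 0) /\
  (forall x h t, V1 U (triple x h t) ->
     f (x + t *: h) =
       \sum_(j < k.+1) t ^+ j *: a j (pairO x h) + t ^+ k *: R (triple x h t)).

End Ck.

From Pilot Require Import Defs.
From HB Require Import structures.
From mathcomp Require Import all_boot all_order all_algebra.
From Stdlib Require Import FunctionalExtensionality PropExtensionality ClassicalEpsilon.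
Import GRing.Theory.
Local Open Scope ring_scope.

(** Existence: if f is C^k, the iterated difference quotient f^[j] is C^(k-j). Put
    b_0(x,h) = x, e_0(x,h) = h, b_(j+1) = (b_j, e_j, 0), e_(j+1) = (0, 0, 1), so that
    b_j + t e_j = (b_(j-1), e_(j-1), t). Then the defining identity of f^[j+1] reads
    f^[j](b_j + t e_j) = f^[j](b_j) + t f^[j+1](b_(j+1) + t e_(j+1)), and telescoping gives
    the expansion with a_j = f^[j] o b_j, which is C^(k-j) because b_j is a continuous
    affine map, and R(x,h,t) = f^[k](b_k + t e_k) - f^[k](b_k).
    Uniqueness: on the line t |-> x + t h the difference of two expansions is
    sum_j t^j d_j + t^k r(t) = 0 with r C^0 and r(0) = 0; t = 0 gives d_0 = 0, and the
    rest is divisible by t at every unit t, hence vanishes by axiom (III).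
    Homogeneity: f(x + t(sh)) = f(x + (st)h) turns the expansion at (x,h) into one at
    (x,sh) with coefficients s^j a_j(x,h); conclude by uniqueness. *)

Local Notation "V ^[ k ]" := (@Defs.iterS _ _ k _ V) (at level 8, format "V ^[ k ]").

Section C0ConceptTheory.
Variables (K : comUnitRingType) (C : C0concept K).
Implicit Types X Y Z E F : Obj C.
Local Notation Kobj := (@KO K C).

#[local] Arguments C0_comp {K c E F G U V f g}.
#[local] Arguments C0_ext {K c E F U f g}.
#[local] Arguments C0_id {K c E U}.
#[local] Arguments C0_cont {K c E F U f}.
#[local] Arguments opn_T {K c E}.
#[local] Arguments opn_I {K c E A B}.
#[local] Arguments C0_units_dense {K c F U f g}.
#[local] Arguments C0_prod {K c E1 E2 F1 F2 U1 U2 f1 f2}.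

Lemma C0_restrict {X Y} {U U' : car X -> Prop} {f : car X -> car Y} :
  opn U' -> opn U -> (forall x, U' x -> U x) -> C0 U f -> C0 U' f.
Proof. by move=> oU' oU sub; apply: C0_comp oU' oU sub (C0_id oU'). Qed.

Lemma C0_restrictT {X Y} {U : car X -> Prop} {f : car X -> car Y} :
  opn U -> C0 (fun _ => True) f -> C0 U f.
Proof. by move=> oU; apply: C0_restrict oU opn_T _. Qed.

Lemma C0_compT {X Y Z} {U : car X -> Prop} {f : car X -> car Y} {g : car Y -> car Z} :
  opn U -> C0 U f -> C0 (fun _ => True) g -> C0 U (fun x => g (f x)).
Proof. by move=> oU; apply: C0_comp oU opn_T _. Qed.

Lemma opn_preimage {X Y} {g : car X -> car Y} {W : car Y -> Prop} :
  C0 (fun _ => True) g -> opn W -> opn (fun x => W (g x)).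
Proof.
move=> cg oW; have [O [oO WO]] := C0_cont opn_T cg W oW.
have -> // : (fun x => W (g x)) = O.
by apply: functional_extensionality => x; apply: propositional_extensionality; exact: WO.
Qed.

Lemma C0_cst {X Y} {U : car X -> Prop} (b : car Y) : opn U -> C0 U (fun _ => b).
Proof.
move=> oU; apply: C0_restrictT oU _.
apply: C0_ext opn_T _ (C0_compT opn_T (C0_pairl _ _ X Y b) (C0_p2 _ _ X Y)).
by move=> x _; rewrite p2_pair.
Qed.

Lemma C0_pairO {X Y1 Y2} {U : car X -> Prop} {f : car X -> car Y1} {g : car X -> car Y2} :
  opn U -> C0 U f -> C0 U g -> C0 U (fun x => pairO (f x) (g x)).
Proof.
move=> oU cf cg.
have oUU : opn (fun z : car (prodO X X) => U (p1 z) /\ U (p2 z)).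
  by apply: opn_I; apply: opn_preimage oU; [exact: C0_p1 | exact: C0_p2].
have cdiag : C0 U (fun x => pairO x x) by apply: C0_restrictT oU (C0_diag _ _ X).
have sub x : U x -> U (p1 (pairO x x)) /\ U (p2 (pairO x x)).
  by rewrite p1_pair p2_pair.
apply: C0_ext oU _ (C0_comp oU oUU sub cdiag (C0_prod oU oU cf cg)).
by move=> x _; rewrite p1_pair p2_pair.
Qed.

Lemma C0D {X Y} {U : car X -> Prop} {f g : car X -> car Y} :
  opn U -> C0 U f -> C0 U g -> C0 U (fun x => f x + g x).
Proof.
move=> oU cf cg; apply: C0_ext oU _ (C0_compT oU (C0_pairO oU cf cg) (C0_add _ _ Y)).
by move=> x _; rewrite p1_pair p2_pair.
Qed.

Lemma C0Z {X Y} {U : car X -> Prop} {a : car X -> car Kobj} {g : car X -> car Y} :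
  opn U -> C0 U a -> C0 U g -> C0 U (fun x => toK (a x) *: g x).
Proof.
move=> oU ca cg; apply: C0_ext oU _ (C0_compT oU (C0_pairO oU ca cg) (C0_scale _ _ Y)).
by move=> x _; rewrite p1_pair p2_pair.
Qed.

Lemma C0_scaler {X Y} {U : car X -> Prop} {g : car X -> car Y} (r : K) :
  opn U -> C0 U g -> C0 U (fun x => r *: g x).
Proof.
move=> oU cg; apply: C0_ext oU _ (C0_compT oU cg (C0_affine _ _ Y r 0)).
by move=> x _; rewrite addr0.
Qed.

Lemma C0B {X Y} {U : car X -> Prop} {f g : car X -> car Y} :
  opn U -> C0 U f -> C0 U g -> C0 U (fun x => f x - g x).
Proof.
move=> oU cf cg; apply: C0_ext oU _ (C0D oU cf (C0_scaler (-1) oU cg)).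
by move=> x _; rewrite scaleN1r.
Qed.

Lemma pairO_lin {X Y} (a a' : car X) (b b' : car Y) s :
  pairO (a + s *: a') (b + s *: b') = pairO a b + s *: pairO a' b'.
Proof. by rewrite -pair_scale -pair_add. Qed.

Lemma p1_lin {X Y} (w w' : car (prodO X Y)) s : p1 (w + s *: w') = p1 w + s *: p1 w'.
Proof. by rewrite -[w]pair_p -[w']pair_p -pairO_lin !p1_pair. Qed.

Lemma p2_lin {X Y} (w w' : car (prodO X Y)) s : p2 (w + s *: w') = p2 w + s *: p2 w'.
Proof. by rewrite -[w]pair_p -[w']pair_p -pairO_lin !p2_pair. Qed.

Lemma ofK_lin (t t' s : K) : ofK (c:=C) (t + s * t') = ofK t + s *: ofK t'.
Proof. by apply: (can_inj (ofK_toK K C)); rewrite toK_add toK_scale !toK_ofK. Qed.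

Lemma triple_lin {X} (y y' v v' : car X) t t' s :
  triple (y + s *: y') (v + s *: v') (t + s * t') = triple y v t + s *: triple y' v' t'.
Proof. by rewrite /triple ofK_lin !pairO_lin. Qed.

Lemma tripleB {X} (y y' v v' : car X) t t' :
  triple y v t - triple y' v' t' = triple (y - y') (v - v') (t - t').
Proof. by rewrite -scaleN1r -triple_lin !scaleN1r mulN1r. Qed.

Lemma triple0 {X} : triple 0 0 0 = 0 :> car (X1 X).
Proof. by rewrite -(subrr (triple 0 0 0)) tripleB !subrr. Qed.

Lemma tripleP {X} (w : car (X1 X)) : exists y v t, w = triple y v t.
Proof.
by exists (p1 (p1 w)), (p2 (p1 w)), (toK (p2 w)); rewrite /triple ofK_toK !pair_p.
Qed.

Lemma V1_triple {X} {S : car X -> Prop} {y v t} :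
  V1 S (triple y v t) <-> S y /\ S (y + t *: v).
Proof. by rewrite /V1 /triple !p1_pair !p2_pair toK_ofK. Qed.

Lemma C0_p11 X : C0 (fun _ => True) (fun w : car (X1 X) => p1 (p1 w)).
Proof. exact: C0_compT opn_T (C0_p1 _ _ _ _) (C0_p1 _ _ _ _). Qed.

Lemma C0_p21 X : C0 (fun _ => True) (fun w : car (X1 X) => p2 (p1 w)).
Proof. exact: C0_compT opn_T (C0_p1 _ _ _ _) (C0_p2 _ _ _ _). Qed.

Lemma opn_V1 {X} {V : car X -> Prop} : opn V -> opn (V1 V).
Proof.
move=> oV; apply: opn_I; apply: opn_preimage oV; first exact: C0_p11.
exact: C0D opn_T (C0_p11 X) (C0Z opn_T (C0_p2 _ _ _ _) (C0_p21 X)).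
Qed.

Lemma opn_iterS {X} {V : car X -> Prop} k : opn V -> opn V^[k].
Proof. by move=> oV; elim: k => [|k IH] //=; apply: opn_V1. Qed.

Definition line_dom {X} (V : car X -> Prop) (x v : car X) : car Kobj -> Prop :=
  fun s => V (x + toK s *: v).

Lemma opn_line_dom {X} {V : car X -> Prop} x v : opn V -> opn (line_dom V x v).
Proof.
move=> oV; have := opn_preimage (C0_line _ _ X v x) oV.
by congr opn; apply: functional_extensionality => s; rewrite addrC.
Qed.

Lemma line_dom0 {X} {V : car X -> Prop} {x} v : V x -> line_dom V x v (ofK 0).
Proof. by rewrite /line_dom toK_ofK scale0r addr0. Qed.

Lemma V1_line_dom {X} {V : car X -> Prop} {x v s} :
  V x -> line_dom V x v s -> V1 V (triple x v (toK s)).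
Proof. by move=> Vx Vxv; apply/V1_triple. Qed.

Lemma C0_line_triple {X} {O : car Kobj -> Prop} (x v : car X) :
  opn O -> C0 O (fun s => triple x v (toK s)).
Proof.
move=> oO; apply: C0_ext oO _ (C0_restrictT oO (C0_pairr _ _ _ _ (pairO x v))).
by move=> s _; rewrite /triple ofK_toK.
Qed.

Lemma scaler_unit_inj {V : lmodType K} {t} {a b : V} :
  t \is a GRing.unit -> t *: a = t *: b -> a = b.
Proof. by move=> ut /(congr1 ( *:%R t^-1)); rewrite !scalerA mulVr // !scale1r. Qed.

Lemma C0_scaler_cancel {Y} {O : car Kobj -> Prop} {f g : car Kobj -> car Y} :
  opn O -> C0 O f -> C0 O g -> (forall s, O s -> toK s *: f s = toK s *: g s) ->
  forall s, O s -> f s = g s.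
Proof.
move=> oO cf cg fg; apply: (C0_units_dense oO cf cg) => s Os us.
exact: scaler_unit_inj us (fg s Os).
Qed.

Lemma is_DQ_unique {X Y} {S : car X -> Prop} {g g' : car X -> car Y} {g1 g1'} :
  opn S -> (forall x, S x -> g x = g' x) -> is_DQ S g g1 -> is_DQ S g' g1' ->
  forall w, V1 S w -> g1 w = g1' w.
Proof.
move=> oS gg' [c1 dq1] [c2 dq2] w; have [y [v [t ->]]] := tripleP w.
case/V1_triple=> Sy Syv; rewrite -[t](toK_ofK K C).
have oO := opn_line_dom y v oS; have oV1 := opn_V1 oS.
have on_line (h : car (X1 X) -> car Y) : C0 (V1 S) h ->
    C0 (line_dom S y v) (fun s => h (triple y v (toK s))).
  exact: C0_comp oO oV1 (fun s => V1_line_dom Sy) (C0_line_triple y v oO).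
apply: (C0_scaler_cancel oO (on_line _ c1) (on_line _ c2)); last by rewrite /line_dom toK_ofK.
move=> s Ss; have S1 := V1_line_dom Sy Ss.
by rewrite -dq1 // -dq2 // !gg' //; case/V1_triple: S1.
Qed.

Lemma Dk_C0 {X Y} {U : car X -> Prop} {f : car X -> car Y} {j G} :
  opn U -> Dk (k:=j) U f G -> C0 U^[j] G.
Proof.
case: j G => [|j] G oU /=; last by case=> Gj [_ []].
by case=> cf fG; apply: C0_ext oU _ cf => x Ux; rewrite fG.
Qed.

Lemma Dk_unique {X Y} {U : car X -> Prop} {f : car X -> car Y} {j G G'} :
  opn U -> Dk (k:=j) U f G -> Dk (k:=j) U f G' -> forall w, U^[j] w -> G w = G' w.
Proof.
move=> oU; elim: j G G' => [|j IH] G G' /=.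
  by move=> [_ fG] [_ fG'] w Uw; rewrite fG // fG'.
move=> [Gj [DGj dq]] [Gj' [DGj' dq']].
exact: is_DQ_unique (opn_iterS j oU) (IH _ _ DGj DGj') dq dq'.
Qed.

Lemma is_DQ_eq {X Y} {S : car X -> Prop} {g g' : car X -> car Y} {g1} :
  (forall x, S x -> g x = g' x) -> is_DQ S g g1 -> is_DQ S g' g1.
Proof.
move=> gg' [c1 dq]; split=> // y v t S1; rewrite -dq //.
by case/V1_triple: S1 => Sy Syv; rewrite !gg'.
Qed.

Lemma Dk_is_DQ {X Y} {U : car X -> Prop} {f : car X -> car Y} {j G G1} :
  opn U -> Dk (k:=j) U f G -> Dk (k:=j.+1) U f G1 -> is_DQ U^[j] G G1.
Proof. by move=> oU DG [G' [DG' dq]]; apply: is_DQ_eq (Dk_unique oU DG' DG) dq. Qed.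

Definition affine {X Y} (h : car X -> car Y) :=
  forall y v s, h (y + s *: v) = h y + s *: (h v - h 0).

Lemma linear_affine {X Y} {h : car X -> car Y} :
  (forall y v s, h (y + s *: v) = h y + s *: h v) -> affine h.
Proof.
move=> hlin y v s; have h0 : h 0 = 0.
  by have := hlin 0 0 (-1); rewrite scaler0 addr0 scaleN1r subrr.
by rewrite h0 subr0.
Qed.

Lemma affine_cst {X Y} (b : car Y) : affine (fun _ : car X => b).
Proof. by move=> y v s; rewrite subrr scaler0 addr0. Qed.

Lemma affine_triple {X Y} {h h' : car X -> car Y} (t : K) :
  affine h -> affine h' -> affine (fun x => triple (h x) (h' x) t).
Proof. by move=> ah ah' y v s; rewrite ah ah' tripleB -triple_lin subrr mulr0 addr0. Qed.

Definition lift1 {X Y} (h : car X -> car Y) : car (X1 X) -> car (X1 Y) :=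
  fun w => pairO (pairO (h (p1 (p1 w))) (h (p2 (p1 w)) - h 0)) (p2 w).

Lemma lift1_triple {X Y} (h : car X -> car Y) y v t :
  lift1 h (triple y v t) = triple (h y) (h v - h 0) t.
Proof. by rewrite /lift1 /triple !p1_pair !p2_pair. Qed.

Lemma affine_lift1 {X Y} {h : car X -> car Y} : affine h -> affine (lift1 h).
Proof.
move=> ah w w' s; have [y [v [t ->]]] := tripleP w; have [y' [v' [t' ->]]] := tripleP w'.
rewrite -triple_lin -[X in _ - lift1 h X]triple0 !lift1_triple !ah tripleB -triple_lin.
by rewrite !subrr !subr0 addrAC.
Qed.

Lemma C0_lift1 {X Y} {h : car X -> car Y} :
  C0 (fun _ => True) h -> C0 (fun _ => True) (lift1 h).
Proof.
move=> ch; apply: C0_pairO opn_T _ (C0_p2 _ _ _ _); apply: C0_pairO opn_T _ _.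
  exact: C0_compT opn_T (C0_p11 X) ch.
exact: C0B opn_T (C0_compT opn_T (C0_p21 X) ch) (C0_cst _ opn_T).
Qed.

Lemma V1_lift1 {X Y} {h : car X -> car Y} {S : car X -> Prop} {S' : car Y -> Prop} :
  affine h -> (forall x, S x -> S' (h x)) -> forall w, V1 S w -> V1 S' (lift1 h w).
Proof.
move=> ah hS w; have [y [v [t ->]]] := tripleP w.
by rewrite lift1_triple !V1_triple -ah => -[/hS ? /hS].
Qed.

Lemma is_DQ_comp_affine {X Y Z} {S : car X -> Prop} {S' : car Y -> Prop}
    {h : car X -> car Y} {g : car Y -> car Z} {g1} :
  opn S -> opn S' -> affine h -> C0 (fun _ => True) h -> (forall x, S x -> S' (h x)) ->
  is_DQ S' g g1 -> is_DQ S (fun x => g (h x)) (fun w => g1 (lift1 h w)).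
Proof.
move=> oS oS' ah ch hS [c1 dq]; have oV := opn_V1 oS; split.
  exact: C0_comp oV (opn_V1 oS') (V1_lift1 ah hS) (C0_restrictT oV (C0_lift1 ch)) c1.
move=> y v t /V1_triple[Sy Syv]; rewrite lift1_triple ah; apply: dq.
by apply/V1_triple; rewrite -ah; split; apply: hS.
Qed.

Fixpoint liftn {X Y} (h : car X -> car Y) (m : nat) : car (iterO m X) -> car (iterO m Y) :=
  match m return car (iterO m X) -> car (iterO m Y) with
  | 0 => h
  | m'.+1 => lift1 (liftn h m')
  end.

Lemma affine_liftn {X Y} {h : car X -> car Y} m : affine h -> affine (liftn h m).
Proof. by move=> ah; elim: m => [|m IH] //=; apply: affine_lift1. Qed.

Lemma C0_liftn {X Y} {h : car X -> car Y} m :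
  C0 (fun _ => True) h -> C0 (fun _ => True) (liftn h m).
Proof. by move=> ch; elim: m => [|m IH] //=; apply: C0_lift1. Qed.

Lemma iterS_liftn {X Y} {h : car X -> car Y} {V : car Y -> Prop} {m w} :
  affine h -> (fun x => V (h x))^[m] w -> V^[m] (liftn h m w).
Proof.
move=> ah; elim: m w => [|m IH] w //=.
exact: V1_lift1 (affine_liftn m ah) IH w.
Qed.

Lemma Dk_comp_affine {X Y Z} {V : car Y -> Prop} {A : car X -> car Y} {g : car Y -> car Z}
    {m G} :
  opn V -> affine A -> C0 (fun _ => True) A -> Dk (k:=m) V g G ->
  Dk (k:=m) (fun x => V (A x)) (fun x => g (A x)) (fun w => G (liftn A m w)).
Proof.
move=> oV aA cA; have oVA := opn_preimage cA oV.
elim: m G => [|m IH] G /=.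
  case=> cg gG; split=> [|x]; last exact: gG.
  exact: C0_comp oVA oV (fun x VAx => VAx) (C0_restrictT oVA cA) cg.
case=> Gm [DGm dq]; exists (fun w => Gm (liftn A m w)); split; first exact: IH.
apply: is_DQ_comp_affine (opn_iterS m oVA) (opn_iterS m oV) _ (C0_liftn m cA) _ dq.
  exact: affine_liftn.
by move=> w; apply: iterS_liftn.
Qed.

(* [reassoc X m] is the identity of the module underlying (X^[1])^[m] = X^[m+1]; it is
   needed because that object is not convertible to (X^[m])^[1]. *)
Fixpoint reassoc X (m : nat) : car (iterO m.+1 X) -> car (iterO m (X1 X)) :=
  match m return car (iterO m.+1 X) -> car (iterO m (X1 X)) with
  | 0 => id
  | m'.+1 => lift1 (reassoc X m')
  end.

Lemma affine_reassoc X m : affine (reassoc X m).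
Proof.
elim: m => [|m IH] /=; last exact: affine_lift1.
by apply: linear_affine.
Qed.

Lemma C0_reassoc X m : C0 (fun _ => True) (reassoc X m).
Proof. by elim: m => [|m IH] /=; [exact: C0_id opn_T | exact: C0_lift1]. Qed.

Lemma iterS_reassoc {X} {V : car X -> Prop} {m w} : V^[m.+1] w -> (V1 V)^[m] (reassoc X m w).
Proof.
elim: m w => [|m IH] w //=.
exact: V1_lift1 (affine_reassoc X m) IH w.
Qed.

Lemma DkS_of_DQ {X Y} {V : car X -> Prop} {g : car X -> car Y} {g1 m G} :
  opn V -> C0 V g -> is_DQ V g g1 -> Dk (k:=m) (V1 V) g1 G ->
  Dk (k:=m.+1) V g (fun w => G (reassoc X m w)).
Proof.
move=> oV cg [c1 dq]; elim: m G => [|m IH] G /=.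
  case=> _ g1G; exists g; split=> //; split.
    by apply: C0_ext (opn_V1 oV) _ c1 => w Vw; rewrite g1G.
  by move=> y v t Vt; rewrite g1G // dq.
case=> Gm [DGm dqm]; exists (fun w => Gm (reassoc X m w)); split; first exact: IH.
apply: is_DQ_comp_affine (opn_iterS m.+1 oV) (opn_iterS m (opn_V1 oV)) _ _ _ dqm.
- exact: affine_reassoc.
- exact: C0_reassoc.
- by move=> w; apply: iterS_reassoc.
Qed.

Lemma Dk_split {X Y} {U : car X -> Prop} {f : car X -> car Y} m j G :
  opn U -> Dk (k:=m + j) U f G -> exists g, Dk (k:=j) U f g /\ Ck m U^[j] g.
Proof.
move=> oU; elim: m j G => [|m IH] j.
  by move=> G DG; exists G; split=> //; exists G; split=> //; apply: Dk_C0 oU DG.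
rewrite addSnnS => G DG.
have [g1 [[g [Dg dq]] [G1 DG1]]] := IH j.+1 G DG.
exists g; split=> //; exists (fun w => G1 (reassoc _ m w)).
exact: DkS_of_DQ (opn_iterS j oU) (Dk_C0 oU Dg) dq DG1.
Qed.

Definition taylor {F} (k : nat) (D : nat -> car F) (r : car Kobj -> car F) (s : car Kobj) :=
  \sum_(j < k.+1) toK s ^+ j *: D j + toK s ^+ k *: r s.

Lemma taylorS {F} k (D : nat -> car F) r s :
  taylor k.+1 D r s = D 0%N + toK s *: taylor k (fun j => D j.+1) r s.
Proof.
rewrite /taylor big_ord_recl expr0 scale1r scalerDr scaler_sumr -addrA scalerA -exprS.
by congr (_ + (_ + _)); apply: eq_bigr => j _; rewrite scalerA -exprS.
Qed.

Lemma taylor_at0 {F} k (D : nat -> car F) {r} : r (ofK 0) = 0 -> taylor k D r (ofK 0) = D 0%N.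
Proof.
move=> r0; case: k => [|k]; first by rewrite /taylor big_ord1 r0 scaler0 addr0 scale1r.
by rewrite taylorS toK_ofK scale0r addr0.
Qed.

Lemma taylorB {F} k (D D' : nat -> car F) r r' s :
  taylor k D r s - taylor k D' r' s = taylor k (fun j => D j - D' j) (fun s => r s - r' s) s.
Proof.
rewrite /taylor opprD addrACA -sumrB -scalerBr; congr (_ + _).
by apply: eq_bigr => j _; rewrite scalerBr.
Qed.

Section TaylorOnOpen.
Context {F : Obj C} {O : car Kobj -> Prop} (oO : opn O).

Lemma C0_powZ j {g : car Kobj -> car F} : C0 O g -> C0 O (fun s => toK s ^+ j *: g s).
Proof.
move=> cg; elim: j => [|j IH]; first by apply: C0_ext oO _ cg => s _; rewrite scale1r.
by apply: C0_ext oO _ (C0Z oO (C0_id oO) IH) => s _; rewrite scalerA -exprS.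
Qed.

Lemma C0_taylor k (D : nat -> car F) {r} : C0 O r -> C0 O (taylor k D r).
Proof.
move=> cr; apply: C0D oO _ (C0_powZ k cr).
elim: k.+1 => [|n IH]; first by apply: C0_ext oO _ (C0_cst 0 oO) => s _; rewrite big_ord0.
apply: C0_ext oO _ (C0D oO IH (C0_powZ n (C0_cst (D n) oO))) => s _.
by rewrite big_ord_recr.
Qed.

Lemma taylor_eq0 k (D : nat -> car F) r :
  O (ofK 0) -> C0 O r -> r (ofK 0) = 0 -> (forall s, O s -> taylor k D r s = 0) ->
  (forall j, (j <= k)%N -> D j = 0) /\ (forall s, O s -> r s = 0).
Proof.
move=> O0 cr r0; elim: k D => [|k IH] D T0.
  have D0 : D 0%N = 0 by rewrite -(taylor_at0 0 D r0) T0.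
  split=> [j|s Os]; first by rewrite leqn0 => /eqP ->.
  by have := T0 s Os; rewrite /taylor big_ord1 D0 scaler0 add0r expr0 scale1r.
have D0 : D 0%N = 0 by rewrite -(taylor_at0 k.+1 D r0) T0.
have T1 : forall s, O s -> taylor k (fun j => D j.+1) r s = 0.
  apply: C0_scaler_cancel oO (C0_taylor _ _ cr) (C0_cst 0 oO) _ => s Os.
  by rewrite scaler0 -(T0 s Os) taylorS D0 add0r.
by have [D_eq0 r_eq0] := IH _ T1; split=> // -[|j] //; apply: D_eq0.
Qed.

Lemma taylor_inj {k} {D D' : nat -> car F} {r r'} :
  O (ofK 0) -> C0 O r -> C0 O r' -> r (ofK 0) = 0 -> r' (ofK 0) = 0 ->
  (forall s, O s -> taylor k D r s = taylor k D' r' s) ->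
  (forall j, (j <= k)%N -> D j = D' j) /\ (forall s, O s -> r s = r' s).
Proof.
move=> O0 cr cr' r0 r'0 TT.
have [] := taylor_eq0 k (fun j => D j - D' j) (fun s => r s - r' s) O0 (C0B oO cr cr').
- by rewrite r0 r'0 subrr.
- by move=> s Os; rewrite -taylorB TT // subrr.
by move=> DD rr; split=> [j /DD | s /rr] /eqP; rewrite subr_eq0 => /eqP.
Qed.
End TaylorOnOpen.

Definition dir {E} (n : nat) : car (prodO E E) -> car (iterO n E) :=
  match n return car (prodO E E) -> car (iterO n E) with
  | 0 => fun z => p2 z
  | n'.+1 => fun _ => triple 0 0 1
  end.

Fixpoint base {E} (n : nat) : car (prodO E E) -> car (iterO n E) :=
  match n return car (prodO E E) -> car (iterO n E) with
  | 0 => fun z => p1 z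
  | n'.+1 => fun z => triple (base n' z) (dir n' z) 0
  end.

Lemma affine_dir E n : affine (@dir E n).
Proof.
case: n => [|n]; last exact: affine_cst.
by apply: linear_affine => y v s; apply: p2_lin.
Qed.

Lemma affine_base E n : affine (@base E n).
Proof.
elim: n => [|n IH] /=; last exact: affine_triple 0 IH (affine_dir E n).
by apply: linear_affine => y v s; apply: p1_lin.
Qed.

Lemma C0_dir E n : C0 (fun _ => True) (@dir E n).
Proof. by case: n => [|n]; [exact: C0_p2 | exact: C0_cst opn_T]. Qed.

Lemma C0_base E n : C0 (fun _ => True) (@base E n).
Proof.
elim: n => [|n IH] /=; first exact: C0_p1.
apply: C0_pairO opn_T _ (C0_cst _ opn_T).
exact: C0_pairO opn_T IH (C0_dir E n).
Qed.

Lemma base_dir_triple {E} n (z : car (prodO E E)) t :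
  base n.+1 z + t *: dir n.+1 z = triple (base n z) (dir n z) t.
Proof. by rewrite -triple_lin !scaler0 !addr0 add0r mulr1. Qed.

Lemma iterS_base {E} {U : car E -> Prop} n z : U^[n] (base n z) <-> U (p1 z).
Proof.
elim: n => [|n IH] //=; rewrite V1_triple scale0r addr0 -IH.
by split=> [[]|Ub].
Qed.

Lemma iterS_base_dir {E} {U : car E -> Prop} n {z t} :
  U (p1 z) -> U (p1 z + t *: p2 z) -> U^[n] (base n z + t *: dir n z).
Proof.
move=> Ux Uxt; elim: n => [|n IH] //.
by rewrite base_dir_triple; apply/V1_triple; split=> //; apply/iterS_base.
Qed.

Lemma DQ_telescope {E F} {U : car E -> Prop} (g : forall j, car (iterO j E) -> car F) n z t :
  (forall j, (j < n)%N -> is_DQ U^[j] (g j) (g j.+1)) ->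
  U (p1 z) -> U (p1 z + t *: p2 z) ->
  g 0%N (p1 z + t *: p2 z) =
    \sum_(j < n) t ^+ j *: g j (base j z) + t ^+ n *: g n (base n z + t *: dir n z).
Proof.
move=> dq Ux Uxt; elim: n dq => [|n IH] dq; first by rewrite big_ord0 add0r scale1r.
rewrite IH; last by move=> j /leqW; apply: dq.
rewrite big_ord_recr -addrA base_dir_triple; congr (_ + _).
have Vn : V1 U^[n] (triple (base n z) (dir n z) t).
  by apply/V1_triple; split; [apply/iterS_base | apply: iterS_base_dir].
move/eqP: (proj2 (dq n (ltnSn n)) _ _ _ Vn); rewrite subr_eq => /eqP ->.
by rewrite scalerDr scalerA -exprSr addrC.
Qed.

Lemma DQ_family {E F} {U : car E -> Prop} {f : car E -> car F} k :
  opn U -> Ck k U f ->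
  exists g : forall j, car (iterO j E) -> car F,
    forall j, (j <= k)%N -> Dk (k:=j) U f (g j) /\ Ck (k - j) U^[j] (g j).
Proof.
move=> oU [G DG].
have gj j : exists g, (j <= k)%N -> Dk (k:=j) U f g /\ Ck (k - j) U^[j] g.
  case: (leqP j k) => [jk | kj]; last by exists (fun _ => 0).
  have := Dk_split (U:=U) (f:=f) (k - j) j; rewrite subnK // => /(_ G oU DG) [g gP].
  by exists g.
exists (fun j => proj1_sig (constructive_indefinite_description _ (gj j))) => j.
exact: proj2_sig (constructive_indefinite_description _ (gj j)).
Qed.

Lemma Ck_comp_base {E F} {U : car E -> Prop} {j m} {g : car (iterO j E) -> car F} :
  opn U -> Ck m U^[j] g -> Ck m (UxE U) (fun z => g (base j z)).
Proof.
move=> oU [G DG]; have -> : UxE U = (fun z => U^[j] (base j z)).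
  by apply: functional_extensionality => z; apply: propositional_extensionality;
    rewrite iterS_base.
by eexists; apply: Dk_comp_affine (opn_iterS j oU) (affine_base E j) (C0_base E j) DG.
Qed.

Definition remainder {E F} k (g : car (iterO k E) -> car F) (w : car (X1 E)) : car F :=
  g (base k (p1 w) + toK (p2 w) *: dir k (p1 w)) - g (base k (p1 w)).

Lemma C0_remainder {E F} {U : car E -> Prop} k {g : car (iterO k E) -> car F} :
  opn U -> C0 U^[k] g -> C0 (V1 U) (remainder k g).
Proof.
move=> oU cg; have oV := opn_V1 oU; have oS := opn_iterS k oU.
have cb : C0 (V1 U) (fun w => base k (p1 w)).
  exact: C0_restrictT oV (C0_compT opn_T (C0_p1 _ _ _ _) (C0_base E k)).
have cd : C0 (V1 U) (fun w => dir k (p1 w)).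
  exact: C0_restrictT oV (C0_compT opn_T (C0_p1 _ _ _ _) (C0_dir E k)).
have cline := C0D oV cb (C0Z oV (C0_restrictT oV (C0_p2 _ _ _ _)) cd).
apply: C0B oV (C0_comp oV oS _ cline cg) (C0_comp oV oS _ cb cg).
  by move=> w [Ux Uxt]; apply: iterS_base_dir.
by move=> w [Ux _]; apply/iterS_base.
Qed.

Lemma remainder_triple {E F} k (g : car (iterO k E) -> car F) x h t :
  remainder k g (triple x h t) =
    g (base k (pairO x h) + t *: dir k (pairO x h)) - g (base k (pairO x h)).
Proof. by rewrite /remainder /triple !p1_pair !p2_pair toK_ofK. Qed.

Lemma expansion_exists {E F} {U : car E -> Prop} {f : car E -> car F} k :
  opn U -> Ck k U f -> exists a R, is_expansion k U f a R.
Proof.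
move=> oU Cf; have [g gP] := DQ_family k oU Cf.
have dq j : (j < k)%N -> is_DQ U^[j] (g j) (g j.+1).
  by move=> jk; apply: Dk_is_DQ oU (gP j (ltnW jk)).1 (gP j.+1 jk).1.
exists (fun j z => g j (base j z)), (remainder k (g k)); split; [|split; [|split]].
- by move=> j jk; apply: Ck_comp_base oU (gP j jk).2.
- exists (remainder k (g k)); split=> //.
  exact: C0_remainder oU (Dk_C0 oU (gP k (leqnn k)).1).
- by move=> x h _; rewrite remainder_triple scale0r addr0 subrr.
- move=> x h t /V1_triple[Ux Uxt]; have [[_ fg0] _] := gP 0%N (leq0n k).
  have := DQ_telescope g k (pairO x h) t dq; rewrite !p1_pair !p2_pair -fg0 // => -> //.
  by rewrite big_ord_recr remainder_triple scalerBr addrA addrAC addrK.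
Qed.

Lemma expansion_on_line {E F} {U : car E -> Prop} {f : car E -> car F} {k a R} x h :
  opn U -> is_expansion k U f a R -> U x ->
  [/\ C0 (line_dom U x h) (fun s => R (triple x h (toK s))),
      R (triple x h (toK (ofK (c:=C) 0))) = 0 &
      forall s, line_dom U x h s ->
        f (x + toK s *: h) =
          taylor k (fun j => a j (pairO x h)) (fun s => R (triple x h (toK s))) s].
Proof.
move=> oU [_ [[R0 [cR _]] [R00 Rexp]]] Ux; have oO := opn_line_dom x h oU; split.
- exact: C0_comp oO (opn_V1 oU) (fun s => V1_line_dom Ux) (C0_line_triple x h oO) cR.
- by rewrite toK_ofK R00.
- by move=> s Us; rewrite Rexp //; apply: V1_line_dom.
Qed.

Lemma expansion_unique {E F} {U : car E -> Prop} {f : car E -> car F} {k a R a' R'} :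
  opn U -> is_expansion k U f a R -> is_expansion k U f a' R' ->
  (forall j, (j <= k)%N -> forall z, UxE U z -> a j z = a' j z) /\
  (forall z, V1 U z -> R z = R' z).
Proof.
move=> oU e e'.
have on_line x h : U x ->
    (forall j, (j <= k)%N -> a j (pairO x h) = a' j (pairO x h)) /\
    (forall s, line_dom U x h s -> R (triple x h (toK s)) = R' (triple x h (toK s))).
  move=> Ux; have [cR R0 Rexp] := expansion_on_line x h oU e Ux.
  have [cR' R'0 R'exp] := expansion_on_line x h oU e' Ux.
  apply: (taylor_inj (opn_line_dom x h oU) (line_dom0 h Ux) cR cR' R0 R'0) => s Us.
  by rewrite -Rexp // -R'exp.
split=> [j jk z Uz | w].
  by rewrite -[z]pair_p; apply: (on_line _ _ Uz).1.
have [x [h [t ->]]] := tripleP w; case/V1_triple=> Ux Uxt.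
by rewrite -[t](toK_ofK K C); apply: (on_line _ _ Ux).2; rewrite /line_dom toK_ofK.
Qed.

Lemma expansion_homogeneous {E F} {U : car E -> Prop} {f : car E -> car F} {k a R} :
  opn U -> is_expansion k U f a R ->
  forall j, (j <= k)%N -> forall x h (s : K), U x ->
    a j (pairO x (s *: h)) = s ^+ j *: a j (pairO x h).
Proof.
move=> oU e j jk x h s Ux.
have [cR R0 Rexp] := expansion_on_line x (s *: h) oU e Ux.
have [cRh Rh0 Rhexp] := expansion_on_line x h oU e Ux.
have oO := opn_line_dom x (s *: h) oU.
have scale_line (t : car Kobj) : toK t *: (s *: h) = toK (s *: t) *: h.
  by rewrite toK_scale scalerA mulrC.
have sub (t : car Kobj) : line_dom U x (s *: h) t -> line_dom U x h (s *: t).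
  by rewrite /line_dom scale_line.
have cR' : C0 (line_dom U x (s *: h)) (fun t => s ^+ k *: R (triple x h (toK (s *: t)))).
  exact: C0_scaler oO (C0_comp oO (opn_line_dom x h oU) sub (C0_scaler s oO (C0_id oO)) cRh).
have R'0 : s ^+ k *: R (triple x h (toK (s *: ofK (c:=C) 0))) = 0.
  by move: Rh0; rewrite toK_scale !toK_ofK mulr0 => ->; rewrite scaler0.
have expand t : line_dom U x (s *: h) t ->
    taylor k (fun i => a i (pairO x (s *: h))) (fun t => R (triple x (s *: h) (toK t))) t =
    taylor k (fun i => s ^+ i *: a i (pairO x h))
      (fun t => s ^+ k *: R (triple x h (toK (s *: t)))) t.
  move=> Ut; rewrite -Rexp // scale_line Rhexp; last exact: sub.
  rewrite /taylor toK_scale; congr (_ + _); first apply: eq_bigr => i _;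
    by rewrite scalerA exprMn mulrC.
exact: (taylor_inj oO (line_dom0 _ Ux) cR cR' R0 R'0 expand).1 j jk.
Qed.

End C0ConceptTheory.

Theorem theorem5p1 (K : comUnitRingType) (C : C0concept K) (E F : Obj C)
  (U : car E -> Prop) (k : nat) (f : car E -> car F) :
  opn U -> Ck k U f ->
  (exists (a : nat -> car (prodO E E) -> car F) (R : car (X1 E) -> car F),
      is_expansion k U f a R) /\
  (forall a R a' R', is_expansion k U f a R -> is_expansion k U f a' R' ->
     (forall j, (j <= k)%N -> forall z, UxE U z -> a j z = a' j z) /\
     (forall z, V1 U z -> R z = R' z)) /\
  (forall a R, is_expansion k U f a R ->
     forall j, (j <= k)%N -> forall x h (s : K), U x ->
       a j (pairO x (s *: h)) = s ^+ j *: a j (pairO x h)).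
Proof.
move=> oU Cf; split; first exact: expansion_exists.
split=> [a R a' R' e e' | a R e]; first exact: expansion_unique oU e e'.
exact: expansion_homogeneous oU e.
Qed.
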